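(* Let $G$ be a $k$-DCFG in Chomsky normal form, let $T$ be a derivation tree of $G$, and let $(v,v')$ be a pump in $T$. Let $T'$ be the tree obtained from $T$ by collapsing this pump, i.e., replacing the subtree rooted at $v$ by the subtree rooted at $v'$ (so the nodes of $T'$ are nodes of $T$). If two nodes $v_1,v_2$ form a pump in $T'$, then $v_1,v_2$ also form a pump in $T$.
   Context: Let $\Sigma$ be a finite alphabet and $1\notin\Sigma$ a separator; $\Sigma_1=\Sigma\cup\{1\}$. A $k$-DCFG $G=\langle N,\Sigma,P,S\rangle$ has a finite set $N$ of nonterminals, each with a rank in $\{0,\dots,k\}$, start symbol $S$ of rank $0$, and rules; it is in Chomsky normal form if every rule has the form $A\to B\cdot C$ or $A\to B\odot_j C$ with $j\le k$, $B,C\in N\setminus\{S\}$ (subject to the rank constraints $\mathrm{rk}(A)=\mathrm{rk}(B)+\mathrm{rk}(C)$ for $\cdot$, $\mathrm{rk}(A)=\mathrm{rk}(B)+\mathrm{rk}(C)-1$ and $\mathrm{rk}(B)\ge j$ for $\odot_j$, all ranks $\le k$), $A\to a$ with $a\in\Sigma_1$ (rank of $a$ is $1$ if $a=1$, else $0$), or $S\to\epsilon$. A derivation tree is a finite rooted ordered tree with nodes labeled by nonterminals in which each internal node labeled $A$ has exactly two children labeled $B,C$ with $A\to B\cdot C$ or $A\to B\odot_j C$ a rule of $G$, and each leaf labeled $A$ corresponds to a rule $A\to a$ or $S\to\epsilon$. The rank of a node is the rank of its label. A node $v'$ is a direct descendant of a node $v$ if $v'$ is a proper descendant of $v$ and all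 nodes on the path from $v$ to $v'$ (inclusive) have the same rank. A pump is a pair $(v,v')$ of internal nodes with the same nonterminal label such that $v'$ is a direct descendant of $v$. *)

From mathcomp Require Import all_boot.
Set Implicit Arguments. Unset Strict Implicit. Unset Printing Implicit Defensive.

(* Operations of binary rules: A -> B . C  (Conc)  or  A -> B (.)_j C  (Wrap j). *)
Inductive dop := Conc | Wrap of nat.

(* The rule set of a k-DCFG over alphabet Sigma with nonterminals N.
   - binr A o B C  : rule A -> B o C
   - termr A a     : rule A -> a, where a = None is the separator 1 and
                     a = Some x is the letter x of Sigma
   - epsr          : rule S -> epsilon                                        *)
Record rules (Sigma N : Type) := Rules {
  binr : N -> dop -> N -> N -> bool;
  termr : N -> option Sigma -> bool;
  epsr : bool }.

Definition is_CNF (Sigma N : Type) (k : nat) (rk : N -> nat) (S : N)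
  (P : rules Sigma N) : Prop :=
  [/\ rk S = 0,
      (forall A, rk A <= k),
      (forall A o B C, binr P A o B C ->
         [/\ B <> S, C <> S &
           match o with
           | Conc => rk A = rk B + rk C
           | Wrap j => [/\ j <= k, rk A + 1 = rk B + rk C & j <= rk B]
           end]) &
      (forall A a, termr P A a -> rk A = (if a is None then 1 else 0))].

Inductive tree (N : Type) := Leaf of N | Node of N & tree N & tree N.
Arguments Leaf {N}. Arguments Node {N}.

Definition label (N : Type) (t : tree N) : N :=
  match t with Leaf A => A | Node A _ _ => A end.

Fixpoint is_deriv (Sigma N : Type) (S : N) (P : rules Sigma N) (t : tree N)
  : Prop :=
  match t with
  | Leaf A => (exists a, termr P A a) \/ (A = S /\ epsr P)
  | Node A l r => (exists o, binr P A o (label l) (label r))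
                  /\ is_deriv S P l /\ is_deriv S P r
  end.

(* Nodes are addressed by positions: paths from the root (false = left child,
   true = right child). *)
Fixpoint subtree (N : Type) (t : tree N) (p : seq bool) : option (tree N) :=
  match p with
  | [::] => Some t
  | b :: p' => match t with
               | Leaf _ => None
               | Node _ l r => subtree (if b then r else l) p'
               end
  end.

Definition is_node (N : Type) (t : tree N) (p : seq bool) : Prop :=
  exists s, subtree t p = Some s.

Definition internal_at (N : Type) (t : tree N) (p : seq bool) (A : N) : Prop :=
  exists l r, subtree t p = Some (Node A l r).

Definition rank_at (N : Type) (rk : N -> nat) (t : tree N) (p : seq bool)
  (n : nat) : Prop :=
  exists s, subtree t p = Some s /\ rk (label s) = n.

Definition direct_desc (N : Type) (rk : N -> nat) (t : tree N)
  (p p' : seq bool) : Prop :=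
  exists q, [/\ q <> [::], p' = p ++ q &
    exists n, forall i, i <= size q -> rank_at rk t (p ++ take i q) n].

Definition pump (N : Type) (rk : N -> nat) (t : tree N) (p p' : seq bool)
  : Prop :=
  exists A, [/\ internal_at t p A, internal_at t p' A & direct_desc rk t p p'].

Fixpoint replace (N : Type) (t : tree N) (p : seq bool) (s : tree N) : tree N :=
  match p with
  | [::] => s
  | b :: p' => match t with
               | Leaf A => Leaf A
               | Node A l r => if b then Node A l (replace r p' s)
                               else Node A (replace l p' s) r
               end
  end.

Definition collapse (N : Type) (t : tree N) (v v' : seq bool) : tree N :=
  match subtree t v' with Some s => replace t v s | None => t end.

(* The node of t that a node p of (collapse t v v') is: nodes inside the
   replaced part, v ++ q, come from v' ++ q; all other nodes are unchanged. *)
Definition orig_pos (v v' p : seq bool) : seq bool :=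
  if prefix v p then v' ++ drop (size v) p else p.

From mathcomp Require Import all_boot.

Set Implicit Arguments.
Unset Strict Implicit.
Unset Printing Implicit Defensive.

(* Every node p of the collapsed tree is the node [orig_pos v v' p] of T, with
   the same label, and internal if p is. A rank-constant path v1 -> v2 of the
   collapsed tree therefore maps to a rank-constant path of T, except when it
   crosses the cut, i.e. v1 lies strictly above v and v2 below it. In that
   case the image path in T runs v1 -> v -> v' -> orig_pos v2, and its middle
   part v -> v' has constant rank because (v, v') is a pump. Neither the
   grammar nor the fact that T is a derivation tree plays any role. *)

Section Prefixes.
Variable T : eqType.

Lemma prefix_anti (s1 s2 : seq T) : prefix s1 s2 -> prefix s2 s1 -> s1 = s2.
Proof.
move=> /prefixP [a ->] /size_prefix.
rewrite size_cat -{2}(addn0 (size s1)) leq_add2l leqn0 size_eq0.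
by move=> /eqP ->; rewrite cats0.
Qed.

Lemma prefix_cat_split (x y z : seq T) : prefix z (x ++ y) -> ~~ prefix z x ->
  exists c d, [/\ z = x ++ c, y = c ++ d & c != [::]].
Proof.
rewrite !prefixE take_cat; case: ltnP => [_ /eqP -> |]; first by rewrite eqxx.
rewrite leq_eqVlt => /orP [/eqP szx | ltxz /eqP ez _].
  by rewrite -szx subnn take0 cats0 take_size => /eqP ->; rewrite eqxx.
exists (take (size z - size x) y), (drop (size z - size x) y).
split; [by rewrite ez | by rewrite cat_take_drop |].
by apply: contraTneq ltxz => c0; rewrite -ez c0 cats0 ltnn.
Qed.

End Prefixes.

Lemma orig_pos_below (v v' d : seq bool) : orig_pos v v' (v ++ d) = v' ++ d.
Proof. by rewrite /orig_pos prefix_prefix drop_size_cat. Qed.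

Lemma orig_pos_root (v v' : seq bool) : orig_pos v v' v = v'.
Proof. by rewrite /orig_pos prefix_refl drop_size cats0. Qed.

Lemma orig_pos_id (v v' p : seq bool) : ~~ prefix v p -> orig_pos v v' p = p.
Proof. by rewrite /orig_pos => /negbTE ->. Qed.

Section Replace.
Variable N : Type.
Implicit Types (t s : tree N) (p v : seq bool).

Lemma subtree_nil t : subtree t [::] = Some t.
Proof. by case: t. Qed.

Lemma subtree_cat t p q :
  subtree t (p ++ q) = obind (fun s => subtree s q) (subtree t p).
Proof. by elim: p t => [|b p IH] [A|A l r] //=; case: b. Qed.

Lemma subtree_replace_below t v s d : is_node t v ->
  subtree (replace t v s) (v ++ d) = subtree s d.
Proof.
elim: v t => [|b v IH] [A|A l r] // [t0] //=.
by case: b => h; apply: IH; exists t0.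
Qed.

Lemma subtree_replace_above t p e s t0 : subtree t p = Some t0 ->
  subtree (replace t (p ++ e) s) p = Some (replace t0 e s).
Proof.
elim: p t => [|b p IH] [A|A l r] //=; last by case: b => /= /IH.
all: by move=> [<-]; case: e => [|[] ?]; rewrite ?subtree_nil.
Qed.

Lemma subtree_replace_disjoint t v p s : ~~ prefix v p -> ~~ prefix p v ->
  subtree (replace t v s) p = subtree t p.
Proof.
elim: v p t => [|b v IH] [|c p] [A|A l r] //=.
by case: b; case: c => //= h1 h2; apply: IH.
Qed.

End Replace.

Definition same_root (N : Type) (t t' : tree N) : Prop :=
  match t, t' with
  | Leaf A, Leaf B | Node A _ _, Node B _ _ => A = B
  | _, _ => False
  end.

Section SameRoot.
Variable N : Type.
Implicit Types t s : tree N.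

Lemma same_root_refl t : same_root t t.
Proof. by case: t. Qed.

Lemma same_root_label t t' : same_root t t' -> label t = label t'.
Proof. by case: t; case: t'. Qed.

Lemma same_root_Node t B x y : same_root t (Node B x y) ->
  exists l r, t = Node B l r.
Proof. by case: t => //= A l r ->; exists l, r. Qed.

Lemma same_root_replace t e s : e != [::] -> same_root t (replace t e s).
Proof. by case: e => // -[] e _; case: t. Qed.

End SameRoot.

Definition rank_path (N : Type) (rk : N -> nat) (t : tree N) (p q : seq bool)
  (n : nat) : Prop :=
  forall i, i <= size q -> rank_at rk t (p ++ take i q) n.

Section RankPath.
Variables (N : Type) (rk : N -> nat).
Implicit Type t : tree N.

Lemma rank_at_uniq t p n m : rank_at rk t p n -> rank_at rk t p m -> n = m.
Proof. by move=> [s [h1 <-]] [s' [h2 <-]]; move: h1; rewrite h2 => -[->]. Qed.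

Lemma rank_path_head t p q n : rank_path rk t p q n -> rank_at rk t p n.
Proof. by move=> /(_ 0 (leq0n _)); rewrite take0 cats0. Qed.

Lemma rank_path_last t p q n : rank_path rk t p q n -> rank_at rk t (p ++ q) n.
Proof. by move=> /(_ _ (leqnn _)); rewrite take_size. Qed.

Lemma rank_path_cat t p q1 q2 n :
  rank_path rk t p (q1 ++ q2) n <->
  rank_path rk t p q1 n /\ rank_path rk t (p ++ q1) q2 n.
Proof.
split => [h | [h1 h2] i].
  split => [i hi | i hi].
    by rewrite -(takel_cat q2 hi); apply: h; rewrite size_cat (leq_trans hi) ?leq_addr.
  have := h (size q1 + i); rewrite size_cat leq_add2l take_cat ltnNge leq_addr.
  by rewrite addKn catA; apply.
rewrite size_cat take_cat; case: ltnP => [/ltnW hi _ | hi]; first exact: h1.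
by rewrite catA => hi2; apply: h2; rewrite leq_subLR.
Qed.

End RankPath.

Section Collapse.
Variables (N : Type) (rk : N -> nat) (T s : tree N) (v v' : seq bool).
Hypothesis node_v : is_node T v.
Hypothesis subtree_v' : subtree T v' = Some s.

Local Notation T' := (replace T v s).
Local Notation f := (orig_pos v v').

Lemma subtree_collapse p t' : subtree T' p = Some t' ->
  exists2 t, subtree T (f p) = Some t & same_root t t'.
Proof.
case: (boolP (prefix v p)) => [/prefixP [d ->] | nvp].
  rewrite orig_pos_below subtree_replace_below // subtree_cat subtree_v' => h.
  by exists t'; rewrite /= ?h //; apply: same_root_refl.
rewrite orig_pos_id //; case: (boolP (prefix p v)) => [/prefixP [e ev] | npv].
  have [t0 ht0] : is_node T p.
    case: node_v => t; rewrite ev subtree_cat.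
    by case ht0: (subtree T p) => [t0|] // _; exists t0.
  rewrite ev (subtree_replace_above _ _ ht0) => -[<-]; exists t0 => //.
  apply: same_root_replace.
  by apply: contraNneq nvp => e0; rewrite ev e0 cats0 prefix_refl.
by rewrite subtree_replace_disjoint // => h; exists t' => //; apply: same_root_refl.
Qed.

Lemma internal_at_collapse p B : internal_at T' p B -> internal_at T (f p) B.
Proof.
move=> [x [y /subtree_collapse [t ht hroot]]].
by have [l [r et]] := same_root_Node hroot; exists l, r; rewrite ht et.
Qed.

Lemma rank_at_collapse p n : rank_at rk T' p n -> rank_at rk T (f p) n.
Proof.
move=> [t' [/subtree_collapse [t ht /same_root_label et] <-]].
by exists t; rewrite ht et.
Qed.

Lemma rank_path_collapse_below c q n :
  rank_path rk T' (v ++ c) q n -> rank_path rk T (v' ++ c) q n.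
Proof.
by move=> h i /h /rank_at_collapse; rewrite -catA orig_pos_below catA.
Qed.

Section SameRank.
Variable m : nat.
Hypotheses (rank_v : rank_at rk T v m) (rank_v' : rank_at rk T v' m).

(* The node v itself is sent to v', which has the same rank as v in T. *)
Lemma rank_at_collapse_fixed u n : prefix u v || ~~ prefix v u ->
  rank_at rk T' u n -> rank_at rk T u n.
Proof.
move=> hu /rank_at_collapse; case: (boolP (prefix v u)) => [vu | nvu].
  rewrite vu orbF in hu; rewrite (prefix_anti hu vu) orig_pos_root.
  by move=> /(rank_at_uniq rank_v') <-.
by rewrite orig_pos_id.
Qed.

Lemma rank_path_collapse_fixed p q n : prefix (p ++ q) v || ~~ prefix v (p ++ q) ->
  rank_path rk T' p q n -> rank_path rk T p q n.
Proof.
move=> hpq h i /h; apply: rank_at_collapse_fixed.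
have hu : prefix (p ++ take i q) (p ++ q).
  by rewrite -{2}(cat_take_drop i q) catA prefix_prefix.
case/orP: hpq => [hv | nv]; first by rewrite (prefix_trans hu hv).
by apply/orP; right; apply: contra nv => /prefix_trans; apply.
Qed.

End SameRank.
End Collapse.

Lemma direct_desc_collapse (N : Type) (rk : N -> nat) (T s : tree N)
  (v v' v1 v2 : seq bool) :
  direct_desc rk T v v' -> subtree T v' = Some s ->
  direct_desc rk (replace T v s) v1 v2 ->
  direct_desc rk T (orig_pos v v' v1) (orig_pos v v' v2).
Proof.
move=> [q [_ ev' [m hm]]] hs [q2 [q2n0 -> [n hn]]].
have rank_v := rank_path_head hm; have := rank_path_last hm; rewrite -ev' => rank_v'.
have node_v : is_node T v by case: rank_v => t [ht _]; exists t.
case: (boolP (prefix v v1)) => [/prefixP [c ev1] | nvv1].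
  rewrite ev1 -catA !orig_pos_below; exists q2; split; rewrite ?catA //.
  by exists n; apply: (rank_path_collapse_below node_v hs); rewrite -ev1.
case: (boolP (prefix v (v1 ++ q2))) => [vv2 | nvv2]; last first.
  rewrite !orig_pos_id //; exists q2; split => //; exists n.
  apply: (rank_path_collapse_fixed node_v hs rank_v rank_v' _ hn).
  by rewrite nvv2 orbT.
have [c [d [ev eq2 cn0]]] := prefix_cat_split vv2 nvv1.
move: hn; rewrite eq2 => /rank_path_cat [hc hd].
have {}hc : rank_path rk T v1 c n.
  apply: (rank_path_collapse_fixed node_v hs rank_v rank_v' _ hc).
  by rewrite -ev prefix_refl.
have mn : m = n by apply: rank_at_uniq rank_v _; rewrite ev; apply: rank_path_last hc.
rewrite orig_pos_id // catA -ev orig_pos_below ev'.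
exists (c ++ q ++ d); split; first by case: (c) cn0.
  by rewrite ev !catA.
exists n; apply/rank_path_cat; split => //; rewrite -ev; apply/rank_path_cat.
split; first by rewrite -mn.
rewrite -ev' -[v']cats0; apply: (rank_path_collapse_below node_v hs).
by rewrite cats0 -ev in hd *.
Qed.

Theorem lemma7 (Sigma N : finType) (k : nat) (rk : N -> nat) (S : N)
  (P : rules Sigma N) (T : tree N) (v v' v1 v2 : seq bool) :
  is_CNF k rk S P ->
  is_deriv S P T ->
  pump rk T v v' ->
  pump rk (collapse T v v') v1 v2 ->
  pump rk T (orig_pos v v' v1) (orig_pos v v' v2).
Proof.
move=> _ _ [A [[l [r hv]] [l' [r' hv']] dd]].
rewrite /collapse hv' => -[B [i1 i2 dd']].
have node_v : is_node T v by exists (Node A l r).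
exists B; split; [exact: internal_at_collapse i1 | exact: internal_at_collapse i2 |].
exact: direct_desc_collapse dd hv' dd'.
Qed.
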